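(* Let $k\geq 2$, let $A_1\subseteq A_2$ be sets, and let $F_1\colon[A_1]^k\to\mathcal{P}(A_1)$ and $F_2\colon[A_2]^k\to\mathcal{P}(A_2)$. Let $\Gamma_1,\Gamma_2$ be sets of functions such that $\Gamma_i$ $k$-generates $F_i$ for $i=1,2$, and suppose $\Gamma_2|_{A_1}=\Gamma_1$. Then for every $\bar\gamma\in[A_1]^k$ we have $F_1(\bar\gamma)=F_2(\bar\gamma)\cap A_1$.
   Context: For a set $S$ and $k<\omega$, $[S]^k$ is the set of $k$-element subsets of $S$. Let $A$ be a set and $k\geq 2$. Let $\Gamma$ be a set of functions of the form $\rho\colon[A]^2\to L_\rho$, where each $L_\rho$ is a linear order with order $<_\rho$ (formally $\Gamma$ is a set of pairs $(\rho,L_\rho)$). A map $F\colon[A]^k\to\mathcal{P}(A)$ is said to be $k$-generated by $\Gamma$ if for all $\bar\gamma\in[A]^k$: $x\in F(\bar\gamma)$ if and only if $x\in A$ and for every $\rho\in\Gamma$ and every $\gamma\in\bar\gamma$ there exist $\gamma'\neq\gamma''$ in $\bar\gamma$ with $\rho\{x,\gamma\}\leq_\rho\rho\{\gamma',\gamma''\}$. For $B\subseteq A$, $\Gamma|_B=\{\rho|_{[B]^2}:\rho\in\Gamma\}$ (each with the same linear order $L_\rho$). *)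

From Stdlib Require Import List.

Set Implicit Arguments.

Record linord := LinOrd {
  lo_car :> Type;
  lo_le : lo_car -> lo_car -> Prop;
  lo_refl : forall x, lo_le x x;
  lo_antisym : forall x y, lo_le x y -> lo_le y x -> x = y;
  lo_trans : forall x y z, lo_le x y -> lo_le y z -> lo_le x z;
  lo_total : forall x y, lo_le x y \/ lo_le y x
}.

Definition ksubset (T : Type) (A : T -> Prop) (k : nat) (S : T -> Prop) : Prop :=
  (forall x, S x -> A x) /\
  exists l : list T, NoDup l /\ length l = k /\ (forall x, S x <-> In x l).

Definition pair2 (T : Type) (x y : T) : T -> Prop := fun z => z = x \/ z = y.

(* A pair (rho, L_rho): rho is a function on 2-element subsets (only its
   values on elements of [A]^2 are meaningful). *)
Record coloring (T : Type) := Coloring {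
  col_L : linord;
  col_f : (T -> Prop) -> lo_car col_L
}.

(* F : [A]^k -> P(A) is k-generated by Gamma (a set of colorings).
   Convention: the clause for gamma = x (where {x,gamma} is not a pair)
   is vacuous. *)
Definition k_generated (T : Type) (k : nat) (A : T -> Prop)
    (Gamma : coloring T -> Prop) (F : (T -> Prop) -> (T -> Prop)) : Prop :=
  forall gbar, ksubset A k gbar ->
  forall x, F gbar x <->
    (A x /\
     forall rho, Gamma rho ->
     forall g, gbar g -> x <> g ->
     exists g' g'', gbar g' /\ gbar g'' /\ g' <> g'' /\
       lo_le (col_L rho) (col_f rho (pair2 x g)) (col_f rho (pair2 g' g''))).

Definition restrict_eq (T : Type) (B : T -> Prop) (rho sigma : coloring T) : Prop :=
  exists e : col_L rho = col_L sigma,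
    forall p, ksubset B 2 p ->
      eq_rect _ lo_car (col_f rho p) _ e = col_f sigma p.

Definition restrict_set_eq (T : Type) (B : T -> Prop)
    (Gamma Gamma' : coloring T -> Prop) : Prop :=
  (forall rho, Gamma rho -> exists sigma, Gamma' sigma /\ restrict_eq B rho sigma) /\
  (forall sigma, Gamma' sigma -> exists rho, Gamma rho /\ restrict_eq B rho sigma).

(* Membership of x in a generated set F(gbar) depends only on how the colorings
   compare the pairs {x, g} and {g', g''} with x, g, g', g'' drawn from
   A1 and gbar; all these pairs lie in [A1]^2, where Gamma2 and Gamma1 agree. *)
From Stdlib Require Import List.

Definition coloring_cond {T : Type} (rho : coloring T) (gbar : T -> Prop) (x : T) : Prop :=
  forall g, gbar g -> x <> g ->
  exists g' g'', gbar g' /\ gbar g'' /\ g' <> g'' /\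
    lo_le (col_L rho) (col_f rho (pair2 x g)) (col_f rho (pair2 g' g'')).

Definition generating_cond {T : Type} (Gamma : coloring T -> Prop)
    (gbar : T -> Prop) (x : T) : Prop :=
  forall rho, Gamma rho -> coloring_cond rho gbar x.

Lemma k_generatedE {T : Type} {k : nat} {A : T -> Prop} {Gamma F} {gbar : T -> Prop} :
  k_generated k A Gamma F -> ksubset A k gbar ->
  forall x, F gbar x <-> A x /\ generating_cond Gamma gbar x.
Proof. intros gen Hgbar; exact (gen gbar Hgbar). Qed.

Lemma ksubset_mono {T : Type} {A B : T -> Prop} {k S} :
  (forall x, A x -> B x) -> ksubset A k S -> ksubset B k S.
Proof. intros AB [SA HS]; split; auto. Qed.

Lemma ksubset_pair2 {T : Type} {A : T -> Prop} {x y : T} :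
  A x -> A y -> x <> y -> ksubset A 2 (pair2 x y).
Proof.
  intros Ax Ay xy; split.
  - intros z [-> | ->]; assumption.
  - exists (x :: y :: nil); split; [|split; [reflexivity|]].
    + constructor; [intros [yx | []]; auto|].
      constructor; [intros []|constructor].
    + intro z; unfold pair2; simpl; intuition congruence.
Qed.

Lemma lo_le_eq_rect {L1 L2 : linord} (e : L1 = L2) (a b : lo_car L1) :
  lo_le L1 a b <-> lo_le L2 (eq_rect _ lo_car a _ e) (eq_rect _ lo_car b _ e).
Proof. destruct e; reflexivity. Qed.

Section Restriction.

Context {T : Type} {B : T -> Prop}.

Lemma restrict_eq_le {rho sigma : coloring T} {p q : T -> Prop} :
  restrict_eq B rho sigma -> ksubset B 2 p -> ksubset B 2 q ->
  lo_le (col_L rho) (col_f rho p) (col_f rho q) <->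
  lo_le (col_L sigma) (col_f sigma p) (col_f sigma q).
Proof.
  intros [e He] Bp Bq.
  rewrite (lo_le_eq_rect e), !He by assumption; reflexivity.
Qed.

Lemma restrict_eq_coloring_cond {rho sigma : coloring T} {gbar : T -> Prop} {x : T} :
  restrict_eq B rho sigma -> (forall g, gbar g -> B g) -> B x ->
  coloring_cond rho gbar x <-> coloring_cond sigma gbar x.
Proof.
  intros R gB Bx.
  assert (pairs_le : forall g g' g'', gbar g -> x <> g ->
            gbar g' -> gbar g'' -> g' <> g'' ->
            lo_le (col_L rho) (col_f rho (pair2 x g)) (col_f rho (pair2 g' g'')) <->
            lo_le (col_L sigma) (col_f sigma (pair2 x g)) (col_f sigma (pair2 g' g''))).
  { intros; apply restrict_eq_le; auto using ksubset_pair2. }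
  split; intros C g Hg xg; destruct (C g Hg xg) as (g' & g'' & H' & H'' & ne & le);
    exists g', g''; repeat split; auto; apply pairs_le; auto.
Qed.

Lemma restrict_set_eq_generating_cond {Gamma Gamma' : coloring T -> Prop}
    {gbar : T -> Prop} {x : T} :
  restrict_set_eq B Gamma Gamma' -> (forall g, gbar g -> B g) -> B x ->
  generating_cond Gamma gbar x <-> generating_cond Gamma' gbar x.
Proof.
  intros [to_restr from_restr] gB Bx; split; intros C.
  - intros sigma Hsigma.
    destruct (from_restr sigma Hsigma) as (rho & Hrho & R).
    apply (restrict_eq_coloring_cond R gB Bx), C, Hrho.
  - intros rho Hrho.
    destruct (to_restr rho Hrho) as (sigma & Hsigma & R).
    apply (restrict_eq_coloring_cond R gB Bx), C, Hsigma.
Qed.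

End Restriction.

Theorem lemma2p4 (T : Type) (k : nat) (A1 A2 : T -> Prop)
    (F1 F2 : (T -> Prop) -> (T -> Prop))
    (Gamma1 Gamma2 : coloring T -> Prop) :
  2 <= k ->
  (forall x, A1 x -> A2 x) ->
  (forall gbar, ksubset A1 k gbar -> forall x, F1 gbar x -> A1 x) ->
  (forall gbar, ksubset A2 k gbar -> forall x, F2 gbar x -> A2 x) ->
  k_generated k A1 Gamma1 F1 ->
  k_generated k A2 Gamma2 F2 ->
  restrict_set_eq A1 Gamma2 Gamma1 ->
  forall gbar, ksubset A1 k gbar ->
  forall x, F1 gbar x <-> (F2 gbar x /\ A1 x).
Proof.
  intros _ A12 _ _ gen1 gen2 restr gbar Hgbar x.
  rewrite (k_generatedE gen1 Hgbar), (k_generatedE gen2 (ksubset_mono A12 Hgbar)).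
  destruct Hgbar as [gA1 _].
  split.
  - intros [A1x C1]; repeat split; auto.
    apply (restrict_set_eq_generating_cond restr gA1 A1x), C1.
  - intros [[_ C2] A1x]; split; auto.
    apply (restrict_set_eq_generating_cond restr gA1 A1x), C2.
Qed.
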